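(* For every $n \geq 1$, every $c \in \{1,\ldots,n\}$, every $p=(p_1,\ldots,p_n) \in (0,1)^n$ with $p_1+\cdots+p_n \leq 1$, and every integer $k \geq 0$, $$\Pr\{T_{c,n}(p) > k\} = \sum_{i=0}^{c-1} (-1)^{c-1-i} \binom{n-i-1}{n-c} \sum_{J \in S_{i,n}} (p_0 + P_J)^k.$$
   Context: Let $p=(p_1,\ldots,p_n)$ with $p_i \in (0,1)$ and $p_1+\cdots+p_n \le 1$, and set $p_0 = 1-(p_1+\cdots+p_n)$. Coupons are drawn independently, one at each time $1,2,\ldots$, from $\{0,1,\ldots,n\}$, coupon $i$ being drawn with probability $p_i$; coupon $0$ (the null coupon) never belongs to the collection. For $1 \le c \le n$, $T_{c,n}(p)$ is the number of draws needed until, for the first time, $c$ distinct coupons among $\{1,\ldots,n\}$ have been drawn. For $J \subseteq \{1,\ldots,n\}$, $P_J = \sum_{j\in J} p_j$ with $P_\emptyset = 0$, and $S_{i,n} = \{J \subseteq \{1,\ldots,n\} : |J| = i\}$. Convention: $0^0=1$. *)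

From HB Require Import structures.
From mathcomp Require Import all_boot all_order all_algebra.
Set Implicit Arguments. Unset Strict Implicit. Unset Printing Implicit Defensive.
Import Order.TTheory GRing.Theory Num.Theory.
Local Open Scope ring_scope.

(* Coupons are the elements of 'I_n.+1 ; ord0 is the null coupon 0 and
   coupon (lift ord0 j) (value j+1) corresponds to p j, j : 'I_n. *)

Definition p0 (R : ringType) (n : nat) (p : 'I_n -> R) : R :=
  1 - \sum_(j < n) p j.

Definition coupon_prob (R : ringType) (n : nat) (p : 'I_n -> R)
  (x : 'I_n.+1) : R :=
  match unlift ord0 x with
  | None => p0 p
  | Some j => p j
  end.

Definition PJ (R : ringType) (n : nat) (p : 'I_n -> R) (J : {set 'I_n}) : R :=
  \sum_(j in J) p j.

Definition collected (n k : nat) (s : {ffun 'I_k -> 'I_n.+1}) (m : nat) : nat :=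
  #|[set s i | i : 'I_k & (i < m)%N] :\ ord0|.

(* T_{c,n} > k for a draw sequence whose first k draws are s: no time
   m <= k at which c distinct coupons of {1..n} have been collected. *)
Definition T_gt (n c k : nat) (s : {ffun 'I_k -> 'I_n.+1}) : bool :=
  [forall m : 'I_k.+1, (collected s m < c)%N].

Definition seq_prob (R : ringType) (n k : nat) (p : 'I_n -> R)
  (s : {ffun 'I_k -> 'I_n.+1}) : R :=
  \prod_(i < k) coupon_prob p (s i).

(* Pr{ T_{c,n}(p) > k }: the event depends only on the first k draws *)
Definition prob_T_gt (R : ringType) (n c k : nat) (p : 'I_n -> R) : R :=
  \sum_(s : {ffun 'I_k -> 'I_n.+1} | T_gt c s) seq_prob p s.

From HB Require Import structures.
From mathcomp Require Import all_boot all_order all_algebra.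
From mathcomp Require Import zify ring.
Import Order.TTheory GRing.Theory Num.Theory.
Local Open Scope ring_scope.

(* A draw sequence s contributes to (p0 + P_J)^k exactly when every non-null
   coupon it draws lies in J.  Summing over |J| = i therefore counts s once for
   each i-superset of the set A of coupons it drew, that is C(n - |A|, i - |A|)
   times, and the theorem reduces to the binomial identity
     sum_(i < c) (-1)^(c-1-i) C(n-i-1, n-c) C(n-|A|, i-|A|) = [|A| < c],
   which follows by Pascal induction from the alternating sum
     sum_(j <= d) (-1)^(d-j) C(m-j, d-j) C(m, j) = [d = 0],
   itself a consequence of trinomial revision and (1 - 1)^d = [d = 0]. *)

Lemma card_supsets (T : finType) (A : {set T}) i :
  #|[set J : {set T} | A \subset J & #|J| == i]| =
  ((#|A| <= i) * 'C(#|T| - #|A|, i - #|A|))%N.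
Proof.
have [leAi | ltiA] := leqP #|A| i; last first.
  rewrite mul0n; apply: eq_card0 => J; rewrite inE.
  apply/negP => /andP[/subset_leq_card leAJ /eqP cardJ].
  by rewrite -cardJ ltnNge leAJ in ltiA.
rewrite mul1n -(cardsC A) addKn -cards_draws.
have setUD (J : {set T}) : A \subset J -> A :|: J :\: A = J.
  by move=> sAJ; rewrite -{1}(setIidPr sAJ) setID.
rewrite -(card_in_imset (f := fun J => J :\: A)); last first.
  move=> J1 J2; rewrite !inE => /andP[sAJ1 _] /andP[sAJ2 _] eqJ.
  by rewrite -(setUD J1) // eqJ setUD.
apply: eq_card => B; rewrite [in RHS]inE; apply/imsetP/andP.
  case=> J; rewrite inE => /andP[sAJ /eqP cardJ] ->.
  by rewrite subsetDr cardsDS // cardJ.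
case=> sBA /eqP cardB.
have disjBA : [disjoint B & A] by rewrite -(setCK A) -subsets_disjoint.
exists (A :|: B); last by rewrite setDUl setDv set0U (setDidPl disjBA).
rewrite inE subsetUl cardsU (disjoint_setI0 _) 1?disjoint_sym //.
by rewrite cards0 subn0 cardB subnKC ?eqxx.
Qed.

Lemma bin_mul_bin x y z : (z <= y <= x)%N ->
  ('C(x, y) * 'C(y, z) = 'C(x, z) * 'C(x - z, y - z))%N.
Proof.
case/andP=> le_zy le_yx; have le_zx := leq_trans le_zy le_yx.
have facts_gt0 : (0 < z`! * (y - z)`! * (x - y)`!)%N by rewrite !muln_gt0 !fact_gt0.
apply/eqP; rewrite -(eqn_pmul2r facts_gt0); apply/eqP.
transitivity ('C(x, y) * ('C(y, z) * (z`! * (y - z)`!)) * (x - y)`!)%N; first ring.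
rewrite bin_fact // -mulnA bin_fact //.
transitivity ('C(x, z) * z`! * ('C(x - z, y - z) * ((y - z)`! * (x - y)`!)))%N; last ring.
have := bin_fact (leq_sub2r z le_yx); rewrite (_ : x - z - (y - z) = x - y)%N; last by lia.
by move=> ->; rewrite -mulnA bin_fact.
Qed.

Section AlternatingBinomialSums.
Variable R : comPzRingType.

Lemma sum_alt_bin d : \sum_(j < d.+1) (-1) ^+ (d - j) * 'C(d, j)%:R = (d == 0)%:R :> R.
Proof.
have := exprDn (-1 : R) 1 d; rewrite addNr expr0n => ->.
by apply: eq_bigr => j _; rewrite expr1n mulr1 mulr_natr.
Qed.

Lemma sum_alt_bin_mul_bin m d : (d <= m)%N ->
  \sum_(j < d.+1) (-1) ^+ (d - j) * 'C(m - j, d - j)%:R * 'C(m, j)%:R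
  = (d == 0)%:R :> R.
Proof.
move=> le_dm.
transitivity ('C(m, d)%:R * \sum_(j < d.+1) (-1) ^+ (d - j) * 'C(d, j)%:R : R).
  rewrite big_distrr; apply: eq_bigr => j _ /=.
  have le_jd : (j <= d)%N by rewrite -ltnS.
  by rewrite -mulrA -natrM mulnC -bin_mul_bin ?le_jd // natrM mulrCA.
by rewrite sum_alt_bin; case: (d) => [|d']; rewrite ?bin0 ?mulr1 ?mulr0.
Qed.

Lemma sum_alt_bin_mul_binS n e : (e <= n)%N ->
  \sum_(j < e.+1) (-1) ^+ (e - j) * 'C(n - j, e - j)%:R * 'C(n.+1, j)%:R
  = 1 :> R.
Proof.
elim: e => [|e IHe] le_en; first by rewrite big_ord1 !subn0 !bin0 expr0 !mul1r.
transitivity (\sum_(j < e.+2) (-1) ^+ (e.+1 - j) * 'C(n.+1 - j, e.+1 - j)%:R * 'C(n.+1, j)%:R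
  + \sum_(j < e.+1) (-1) ^+ (e - j) * 'C(n - j, e - j)%:R * 'C(n.+1, j)%:R : R).
  rewrite big_ord_recr [X in _ = X + _]big_ord_recr /= [RHS]addrAC subnn.
  congr (_ + _); last by rewrite !bin0.
  rewrite -big_split; apply: eq_bigr => j _ /=.
  have le_je : (j <= e)%N by rewrite -ltnS.
  have le_jn : (j <= n)%N by rewrite (leq_trans le_je) // ltnW.
  by rewrite (subSn le_je) (subSn le_jn) binS natrD exprS; ring.
by rewrite sum_alt_bin_mul_bin ?add0r ?IHe // ltnW.
Qed.

Lemma sum_alt_bin_supsets n a c : (c <= n)%N ->
  \sum_(0 <= i < c) (-1) ^+ (c - 1 - i) * 'C(n - i - 1, n - c)%:R *
     ((a <= i) * 'C(n - a, i - a))%N%:R = (a < c)%:R :> R.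
Proof.
move=> le_cn; have [le_ca | lt_ac] := leqP c a.
  rewrite big_nat_cond big1 // => i /andP[/andP[_ lt_ic] _].
  by rewrite leqNgt (leq_trans lt_ic le_ca) mul0n mulr0.
rewrite (@big_cat_nat _ _ _ a) ?(ltnW lt_ac) //=.
rewrite big_nat_cond big1 ?add0r => [|i /andP[/andP[_ lt_ia] _]]; last first.
  by rewrite leqNgt lt_ia mul0n mulr0.
rewrite -{1}[a]add0n big_addn big_mkord.
have -> : (c - a = (c - 1 - a).+1)%N by lia.
have le_ca_na : (c - 1 - a <= n - a - 1)%N by lia.
transitivity (1 : R); last by [].
refine (etrans _ (sum_alt_bin_mul_binS (n - a - 1) (c - 1 - a) le_ca_na)).
apply: eq_bigr => j _; have := ltn_ord j; rewrite leq_addl mul1n addnK => lt_j.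
rewrite (_ : c - 1 - (j + a) = c - 1 - a - j)%N; last by lia.
rewrite (_ : n - (j + a) - 1 = n - a - 1 - j)%N; last by lia.
rewrite (_ : n - c = (n - a - 1 - j) - (c - 1 - a - j))%N; last by lia.
by rewrite bin_sub; [congr (_ * 'C(_, _)%:R); lia | lia].
Qed.

End AlternatingBinomialSums.

Lemma lift_imset_notin n (i0 : 'I_n.+1) (A : {pred 'I_n}) : i0 \notin lift i0 @: A.
Proof. by apply/imsetP => -[j _ /eqP]; rewrite (negbTE (neq_lift _ _)). Qed.

Lemma card_lift_preim n (i0 : 'I_n.+1) (X : {set 'I_n.+1}) :
  #|[set j | lift i0 j \in X]| = #|X :\ i0|.
Proof.
rewrite -(card_imset _ (@lift_inj _ i0)); apply: eq_card => x; rewrite !inE.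
case: (unliftP i0 x) => [j ->|->]; last first.
  by rewrite eqxx (negbTE (lift_imset_notin _ _ _)).
by rewrite mem_imset ?inE 1?eq_sym ?neq_lift //; apply: lift_inj.
Qed.

Section Draws.
Variables (n k : nat).
Implicit Type s : {ffun 'I_k -> 'I_n.+1}.

Definition drawn s m : {set 'I_n} :=
  [set j | lift ord0 j \in [set s i | i : 'I_k & (i < m)%N]].

Lemma collectedE s m : collected s m = #|drawn s m|.
Proof. by rewrite card_lift_preim. Qed.

Lemma drawn_sub_all s m : drawn s m \subset drawn s k.
Proof.
apply/subsetP => j; rewrite !inE => /imsetP[i _ ->].
by apply/imsetP; exists i; rewrite ?inE.
Qed.

Lemma T_gtE c s : T_gt c s = (#|drawn s k| < c)%N.
Proof.
apply/forallP/idP => [/(_ ord_max) | lt_c m]; first by rewrite collectedE.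
by rewrite collectedE (leq_ltn_trans _ lt_c) ?subset_leq_card ?drawn_sub_all.
Qed.

Definition allowed (J : {set 'I_n}) : {set 'I_n.+1} := ord0 |: lift ord0 @: J.

Lemma drawn_subsetE s (J : {set 'I_n}) :
  (drawn s k \subset J) = (s \in ffun_on (mem (allowed J))).
Proof.
apply/subsetP/ffun_onP => [sJ i | sJ j].
  rewrite !inE; case: (unliftP ord0 (s i)) => [j e|->]; last by rewrite eqxx.
  rewrite e mem_imset ?orbT ?sJ //; last exact: lift_inj.
  by rewrite inE; apply/imsetP; exists i; rewrite ?inE.
rewrite inE => /imsetP[i _ e]; move: (sJ i); rewrite !inE -e.
by rewrite eq_sym (negbTE (neq_lift _ _)) mem_imset //; apply: lift_inj.
Qed.
End Draws.
Arguments drawn {n k}.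
Arguments allowed {n}.

Section Probability.
Variables (R : comNzRingType) (n k : nat) (p : 'I_n -> R).

Lemma sum_coupon_prob_allowed (J : {set 'I_n}) :
  \sum_(x in allowed J) coupon_prob p x = p0 p + PJ p J.
Proof.
rewrite big_setU1 ?lift_imset_notin //=.
rewrite big_imset /=; last by move=> ? ? _ _; apply: lift_inj.
by rewrite /coupon_prob unlift_none; congr (_ + _); apply: eq_bigr => j _; rewrite liftK.
Qed.

Lemma sum_seq_prob_drawn_subset (J : {set 'I_n}) :
  \sum_(s : {ffun 'I_k -> 'I_n.+1} | drawn s k \subset J) seq_prob p s
  = (p0 p + PJ p J) ^+ k.
Proof.
rewrite -sum_coupon_prob_allowed -[X in _ ^+ X](card_ord k) -prodr_const.
by rewrite bigA_distr_big; apply: eq_bigl => s; apply: drawn_subsetE.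
Qed.

Lemma prob_T_gtE c :
  prob_T_gt c k p =
  \sum_(s : {ffun 'I_k -> 'I_n.+1}) seq_prob p s * (#|drawn s k| < c)%:R.
Proof.
rewrite /prob_T_gt big_mkcond; apply: eq_bigr => s _.
by rewrite T_gtE; case: ifP; rewrite ?mulr1 ?mulr0.
Qed.

Lemma sum_pow_p0_PJ i :
  \sum_(J : {set 'I_n} | #|J| == i) (p0 p + PJ p J) ^+ k =
  \sum_(s : {ffun 'I_k -> 'I_n.+1})
     seq_prob p s * #|[set J : {set 'I_n} | drawn s k \subset J & #|J| == i]|%:R.
Proof.
under eq_bigr => J _ do rewrite -sum_seq_prob_drawn_subset.
rewrite (exchange_big_dep xpredT) //=; apply: eq_bigr => s _.
rewrite (eq_bigl [in [set J : {set 'I_n} | drawn s k \subset J & #|J| == i]]).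
  by rewrite sumr_const mulr_natr.
by move=> J; rewrite !inE andbC.
Qed.

End Probability.

Theorem theorem1 (R : realFieldType) (n c : nat) (p : 'I_n -> R) (k : nat) :
  (1 <= n)%N -> (1 <= c <= n)%N ->
  (forall i, 0 < p i < 1) -> \sum_(i < n) p i <= 1 ->
  prob_T_gt c k p =
  \sum_(i < c) (-1) ^+ (c - 1 - i) * ('C(n - i - 1, n - c))%:R *
     \sum_(J : {set 'I_n} | #|J| == i) (p0 p + PJ p J) ^+ k.
Proof.
move=> _ /andP[_ le_cn] _ _.
rewrite prob_T_gtE.
under [RHS]eq_bigr => i _ do rewrite sum_pow_p0_PJ big_distrr.
rewrite [RHS]exchange_big; apply: eq_bigr => s _ /=.
rewrite -(sum_alt_bin_supsets R n #|drawn s k| c le_cn) big_mkord big_distrr.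
by apply: eq_bigr => i _; rewrite card_supsets card_ord mulrCA.
Qed.
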